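(* Let $\Theta\subseteq\mathbb Z^{Nd}$ be finite and symmetric, let $\eta>4Nd$, and assume that for all $\mathbf x,\mathbf y\in\Theta$ with $\mathbf x\ne\pi\mathbf y$ for every $\pi\in S_N$, $$|(\lambda V(\mathbf x)+U(\mathbf x))-(\lambda V(\mathbf y)+U(\mathbf y))|\ge\eta.$$ Then for every normalized eigenfunction $\varphi\in\ell^2(\Theta)$ of $H_\Theta$ there exists $\mathbf x\in\Theta$ such that $$|\varphi(\mathbf y)|\le\Big(\frac{2Nd}{\eta-2Nd}\Big)^{\min_{\pi\in S_N}\|\mathbf y-\pi\mathbf x\|_1}\quad\text{for all }\mathbf y\in\Theta.$$
   Context: Let $d,N\ge1$. Points of $\mathbb Z^{Nd}$: $\mathbf x=(x_1,\dots,x_N)$, $x_j\in\mathbb Z^d$; $S_N$ acts by $\pi\mathbf x=(x_{\pi(1)},\dots,x_{\pi(N)})$; symmetric = invariant under all $\pi\in S_N$. $H=-\Delta^{(N)}+\lambda V+U$ on $\ell^2(\mathbb Z^{Nd})$ with $\lambda>0$, $(\Delta^{(N)}\varphi)(\mathbf x)=\sum_{\|\mathbf y-\mathbf x\|_1=1}\varphi(\mathbf y)$, $V(\mathbf x)=\sum_j\mathcal V(x_j)$ for a (fixed) real function $\mathcal V$ on $\mathbb Z^d$, $U(\mathbf x)=\sum_{i<j}\mathcal U(x_i-x_j)$ with $\mathcal U:\mathbb Z^d\to\mathbb R$ finitely supported; $H_\Theta=1_\Theta H1_\Theta$ on $\ell^2(\Theta)$. *)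

From HB Require Import structures.
From mathcomp Require Import all_boot all_order all_algebra all_fingroup.
From mathcomp Require Import finmap.
From mathcomp Require Import complex.
Set Implicit Arguments. Unset Strict Implicit. Unset Printing Implicit Defensive.
Import Order.TTheory GRing.Theory Num.Theory.
Local Open Scope ring_scope.
Local Open Scope complex_scope.

(* A point of Z^{Nd}: an N x d integer matrix; row j is the particle x_j in Z^d. *)
Definition point (N d : nat) := 'M[int]_(N, d).

Definition pact (N d : nat) (p : 'S_N) (x : point N d) : point N d :=
  row_perm p x.

Definition l1dist (N d : nat) (x y : point N d) : nat :=
  (\sum_(i < N) \sum_(j < d) `|x i j - y i j|%N)%N.

Definition symdist (N d : nat) (y x : point N d) : nat :=
  \big[minn/l1dist y x]_(p : 'S_N) l1dist y (pact p x).

Definition symmetric_set (N d : nat) (Th : {fset point N d}) : Prop :=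
  forall x, x \in Th -> forall p : 'S_N, pact p x \in Th.

Definition Vpot (R : rcfType) (N d : nat) (Vc : 'rV[int]_d -> R) (x : point N d) : R :=
  \sum_(j < N) Vc (row j x).

Definition Upot (R : rcfType) (N d : nat) (Uc : 'rV[int]_d -> R) (x : point N d) : R :=
  \sum_(i < N) \sum_(j < N | (i < j)%N) Uc (row i x - row j x).

Definition finitely_supported (R : rcfType) (d : nat) (Uc : 'rV[int]_d -> R) : Prop :=
  exists S : seq 'rV[int]_d, forall z, Uc z != 0 -> z \in S.

Definition HTheta (R : rcfType) (N d : nat) (lam : R) (Vc Uc : 'rV[int]_d -> R)
  (Th : {fset point N d}) (phi : point N d -> R[i]) (x : point N d) : R[i] :=
  - (\sum_(y <- Th | l1dist y x == 1%N) phi y)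
  + ((lam * Vpot Vc x + Upot Uc x)%:C * phi x).

(* phi in l^2(Theta) is a normalized eigenfunction of H_Theta
   (only the values of phi on Theta are relevant) *)
Definition normalized_eigenfunction (R : rcfType) (N d : nat) (lam : R)
  (Vc Uc : 'rV[int]_d -> R) (Th : {fset point N d}) (phi : point N d -> R[i]) : Prop :=
  (\sum_(x <- Th) `|phi x| ^+ 2 = 1) /\
  exists E : R[i], forall x, x \in Th -> HTheta lam Vc Uc Th phi x = E * phi x.

(* Let x maximise |phi| on Theta and write W = lambda V + U.  The eigenvalue
   equation gives |W y - E| |phi y| <= sum of |phi z| over the at most 2Nd
   lattice neighbours z of y.  At y = x this forces |W x - E| <= 2Nd, so by
   the gap condition |W y - E| >= eta - 2Nd at every y off the orbit of x.
   There the same inequality shows that |phi y| is at most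
   q = 2Nd / (eta - 2Nd) times the largest neighbouring amplitude, and
   induction on the distance to the orbit of x gives |phi y| <= q ^ dist. *)

From HB Require Import structures.
From mathcomp Require Import all_boot all_order all_algebra all_fingroup.
From mathcomp Require Import finmap.
From mathcomp Require Import complex.
From mathcomp Require Import zify ring lra.
Import Order.TTheory GRing.Theory Num.Theory.
Local Open Scope ring_scope.
Local Open Scope complex_scope.

Section LatticeDistance.
Context {N d : nat}.
Implicit Types x y z w : point N d.

Lemma l1distC y z : l1dist y z = l1dist z y.
Proof. by apply: eq_bigr => i _; apply: eq_bigr => j _; rewrite distnC. Qed.

Lemma l1dist_triangle y z w : (l1dist y w <= l1dist y z + l1dist z w)%N.
Proof.
rewrite /l1dist -big_split /=; apply: leq_sum => i _.
rewrite -big_split /=; apply: leq_sum => j _; exact: leqD_dist.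
Qed.

Lemma l1distxx y : l1dist y y = 0%N.
Proof. by rewrite /l1dist big1 // => i _; rewrite big1 // => j _; rewrite subrr. Qed.

Lemma pact1 x : pact 1 x = x.
Proof. exact: row_perm1. Qed.

Lemma pactK (p : 'S_N) : cancel (@pact N d p) (pact p^-1).
Proof. by move=> x; apply/matrixP => i j; rewrite /pact !mxE permKV. Qed.

Lemma symdist_le y x (p : 'S_N) : (symdist y x <= l1dist y (pact p x))%N.
Proof. by rewrite /symdist -leEnat -minEnat; exact: bigmin_le. Qed.

Lemma symdist_attained y x : exists p : 'S_N, symdist y x = l1dist y (pact p x).
Proof.
apply: (big_ind (fun v => exists p : 'S_N, v = l1dist y (pact p x))).
- by exists 1%g; rewrite pact1.
- move=> _ _ [p ->] [p' ->].
  by case: (leqP (l1dist y (pact p x)) (l1dist y (pact p' x))); [exists p | exists p'].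
- by move=> p _; exists p.
Qed.

Lemma symdist_triangle y z x : (symdist y x <= l1dist y z + symdist z x)%N.
Proof.
have [p ->] := symdist_attained z x.
exact: leq_trans (symdist_le y x p) (l1dist_triangle y z _).
Qed.

Lemma symdist_gt0_off_orbit {y x} :
  (0 < symdist y x)%N -> forall p : 'S_N, x != pact p y.
Proof.
move=> pos p; apply: contraTneq pos => ->.
by have := symdist_le y (pact p y) p^-1; rewrite pactK l1distxx leqn0 => /eqP ->.
Qed.

End LatticeDistance.

Section Neighbours.
Context {N d : nat}.
Implicit Types y z : point N d.

Lemma l1dist_eq1_unit_step {z y i j} : l1dist z y = 1%N -> z i j != y i j ->
  (forall i' j', (i', j') != (i, j) -> z i' j' = y i' j') /\ `|z i j - y i j|%N = 1%N.
Proof.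
rewrite /l1dist pair_bigA (bigD1 (i, j)) //= => dist1 zy_ij.
have : (0 < `|z i j - y i j|)%N by rewrite absz_gt0 subr_eq0.
move: dist1; set rest := (\sum_(ij | ij != (i, j)) _)%N => dist1 pos.
have /eqP : rest = 0%N by lia.
rewrite sum_nat_eq0 => /forallP rest0; split; last by lia.
move=> i' j' ne; move: (rest0 (i', j')).
by rewrite ne /= absz_eq0 subr_eq0 => /eqP.
Qed.

(* A lattice neighbour of y is determined by the coordinate in which it
   differs from y and by the sign of that difference. *)
Definition step_of y z : option ('I_N * 'I_d * bool) :=
  if [pick ij | z ij.1 ij.2 != y ij.1 ij.2] is Some ij
  then Some (ij, y ij.1 ij.2 < z ij.1 ij.2) else None.

Lemma step_of_neighbour {y z} : l1dist z y = 1%N ->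
  exists2 ij : 'I_N * 'I_d, z ij.1 ij.2 != y ij.1 ij.2 &
    step_of y z = Some (ij, y ij.1 ij.2 < z ij.1 ij.2).
Proof.
rewrite /step_of; case: pickP => [ij ne _|same]; first by exists ij.
by rewrite /l1dist big1 // => i _; rewrite big1 // => j _;
  move/negbFE/eqP: (same (i, j)) => /= ->; rewrite subrr.
Qed.

Lemma step_of_inj y z1 z2 : l1dist z1 y = 1%N -> l1dist z2 y = 1%N ->
  step_of y z1 = step_of y z2 -> z1 = z2.
Proof.
move=> d1 d2; have [[i j] /= ne1 ->] := step_of_neighbour d1.
have [[i' j'] /= ne2 ->] := step_of_neighbour d2; case=> ii' jj' sign; subst i' j'.
have [out1 unit1] := l1dist_eq1_unit_step d1 ne1; have [out2 unit2] := l1dist_eq1_unit_step d2 ne2.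
apply/matrixP => a b; case: (eqVneq (a, b) (i, j)) => [[-> ->]|ne].
  by move: sign unit1 unit2 ne1 ne2; case: ltrP; case: ltrP => // *; lia.
by rewrite out1 // out2.
Qed.

Lemma count_neighbours_le y (s : seq (point N d)) :
  uniq s -> (count (fun z => l1dist z y == 1%N) s <= 2 * N * d)%N.
Proof.
move=> s_uniq; rewrite -size_filter.
set nbrs := filter _ s.
have nbrs1 z : z \in nbrs -> l1dist z y = 1%N by rewrite mem_filter => /andP[/eqP].
have -> : (2 * N * d = size (map Some (enum {: 'I_N * 'I_d * bool})))%N.
  by rewrite size_map -cardE !card_prod !card_ord card_bool; lia.
rewrite -(size_map (step_of y)); apply: uniq_leq_size.
  rewrite map_inj_in_uniq ?filter_uniq // => z1 z2 /nbrs1 d1 /nbrs1 d2.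
  exact: step_of_inj.
by move=> _ /mapP[z /nbrs1 /step_of_neighbour[ij _ ->] ->]; rewrite map_f ?mem_enum.
Qed.

Lemma sum_neighbours_le (F : numDomainType) y (s : seq (point N d))
    (f : point N d -> F) c :
  uniq s -> 0 <= c -> {in s, forall z, l1dist z y = 1%N -> f z <= c} ->
  \sum_(z <- s | l1dist z y == 1%N) f z <= (2 * N * d)%:R * c.
Proof.
move=> s_uniq c_ge0 f_le.
apply: le_trans (_ : \sum_(z <- s | l1dist z y == 1%N) c <= _).
  rewrite big_seq_cond [leRHS]big_seq_cond; apply: ler_sum => z /andP[zs /eqP].
  exact: f_le.
rewrite big_const_seq iter_addr_0 mulr_natl.
exact: ler_wpMn2l c_ge0 _ _ (count_neighbours_le y s s_uniq).
Qed.

End Neighbours.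

(* In the application [a y] is |phi y| and [m y] is |W y - E|. *)
Section Decay.
Context {F : realFieldType} {N d : nat} {Th : seq (point N d)}.
Context {a m : point N d -> F} {x : point N d} {eta : F}.
Let D : F := (2 * N * d)%:R.
Let q : F := D / (eta - D).

Hypothesis Th_uniq : uniq Th.
Hypothesis a_ge0 : forall y, 0 <= a y.
Hypothesis a_le1 : {in Th, forall y, a y <= 1}.
Hypothesis local_bound :
  {in Th, forall y, m y * a y <= \sum_(z <- Th | l1dist z y == 1%N) a z}.
Hypothesis x_in : x \in Th.
Hypothesis ax_gt0 : 0 < a x.
Hypothesis a_max : {in Th, forall y, a y <= a x}.
Hypothesis gap : {in Th, forall y, (0 < symdist y x)%N -> eta <= m x + m y}.
Hypothesis D_lt_eta : D < eta.

Lemma detuning_at_max : m x <= D.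
Proof.
rewrite -(ler_pM2r ax_gt0); apply: le_trans (local_bound _ x_in) _.
by apply: sum_neighbours_le => // z zTh _; exact: a_max.
Qed.

Lemma detuning_off_orbit y : y \in Th -> (0 < symdist y x)%N -> eta - D <= m y.
Proof. by move=> yTh pos; have := gap _ yTh pos; have := detuning_at_max; lra. Qed.

Lemma amplitude_decay k y : y \in Th -> (k <= symdist y x)%N -> a y <= q ^+ k.
Proof.
elim: k y => [|k IH] y yTh k_le; first by rewrite expr0 a_le1.
have eta_D_gt0 : 0 < eta - D by rewrite subr_gt0.
have q_ge0 : 0 <= q by rewrite divr_ge0 ?ler0n ?ltW.
have nbr_le : {in Th, forall z, l1dist z y = 1%N -> a z <= q ^+ k}.
  move=> z zTh zy1; apply: IH => //.
  by have := symdist_triangle y z x; rewrite l1distC zy1; lia.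
have nbr_sum : \sum_(z <- Th | l1dist z y == 1%N) a z <= D * q ^+ k.
  by apply: sum_neighbours_le => //; exact: exprn_ge0.
have off := detuning_off_orbit _ yTh (leq_ltn_trans (leq0n k) k_le).
rewrite exprS -(ler_pM2l eta_D_gt0) mulrA [(eta - D) * q]mulrC divfK ?gt_eqF //.
exact: le_trans (ler_wpM2r (a_ge0 y) off) (le_trans (local_bound _ yTh) nbr_sum).
Qed.

End Decay.

Lemma sum_sqr_eq1_le1 {F : realDomainType} {I : eqType} {s : seq I} {a : I -> F} y :
  \sum_(z <- s) a z ^+ 2 = 1 -> (forall z, 0 <= a z) -> y \in s -> a y <= 1.
Proof.
move=> sum1 a_ge0 ys; rewrite -(@expr_le1 _ 2) // -sum1 (big_rem y ys) /=.
by rewrite lerDl sumr_ge0 // => z _; exact: sqr_ge0.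
Qed.

Lemma seq_argmax {F : realDomainType} {I : eqType} {s : seq I} (f : I -> F) :
  s != [::] -> exists2 x, x \in s & {in s, forall y, f y <= f x}.
Proof.
elim: s => // z [|z' s] IH _.
  by exists z; rewrite ?mem_head // => y; rewrite mem_seq1 => /eqP ->.
have [x xs x_max] := IH isT; have [le_zx|lt_xz] := lerP (f z) (f x).
  by exists x; [rewrite inE xs orbT | move=> y /[!inE] /predU1P[->|/x_max]].
exists z; first exact: mem_head.
by move=> y /[!inE] /predU1P[->//|/x_max le_yx]; exact: le_trans le_yx (ltW lt_xz).
Qed.

Lemma normalized_argmax {F : realDomainType} {I : eqType} {s : seq I} {a : I -> F} :
  \sum_(z <- s) a z ^+ 2 = 1 -> (forall z, 0 <= a z) ->
  exists2 x, x \in s & 0 < a x /\ {in s, forall y, a y <= a x}.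
Proof.
move=> sum1 a_ge0.
have s_nil : s != [::].
  by apply/eqP => s0; move: sum1; rewrite s0 big_nil => /eqP; rewrite eq_sym oner_eq0.
have [x xs a_max] := seq_argmax a s_nil; exists x => //; split=> //.
rewrite lt_def a_ge0 andbT; apply/eqP => ax0; move: sum1.
rewrite big1_seq => [/eqP|z /andP[_ zs]]; first by rewrite eq_sym oner_eq0.
by rewrite (@le_anti _ _ (a z) 0) ?expr0n // a_ge0 -ax0 a_max.
Qed.

Lemma normr_ReE {R : rcfType} (z : R[i]) : `|z| = (complex.Re `|z|)%:C.
Proof. by rewrite RRe_real ?normr_real. Qed.

Lemma normr_real_complex {R : rcfType} (r : R) : `|r%:C| = `|r|%:C.
Proof. by rewrite normc_def /= expr0n /= addr0 sqrtr_sqr. Qed.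

Lemma Re_normr_ge0 {R : rcfType} (z : R[i]) : 0 <= complex.Re `|z|.
Proof. by rewrite -ler0c -normr_ReE. Qed.

Lemma dist_le_detunings {R : rcfType} (w w' : R) (E : R[i]) :
  `|w - w'| <= complex.Re `|w%:C - E| + complex.Re `|w'%:C - E|.
Proof.
rewrite -lecR rmorphD /= -!normr_ReE -normr_real_complex rmorphB /=.
have -> : w%:C - w'%:C = (w%:C - E) - (w'%:C - E) by ring.
exact: ler_normB.
Qed.

Definition onsite_energy {R : rcfType} {N d : nat} (lam : R) (Vc Uc : 'rV[int]_d -> R)
  (x : point N d) : R := lam * Vpot Vc x + Upot Uc x.

Lemma eigen_local_bound {R : rcfType} {N d : nat} (lam : R) (Vc Uc : 'rV[int]_d -> R)
    (Th : {fset point N d}) (phi : point N d -> R[i]) (E : R[i]) y :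
  HTheta lam Vc Uc Th phi y = E * phi y ->
  complex.Re `|(onsite_energy lam Vc Uc y)%:C - E| * complex.Re `|phi y|
    <= \sum_(z <- Th | l1dist z y == 1%N) complex.Re `|phi z|.
Proof.
rewrite /HTheta => eigen.
have nbr_sum : ((onsite_energy lam Vc Uc y)%:C - E) * phi y
               = \sum_(z <- Th | l1dist z y == 1%N) phi z.
  by rewrite mulrBl -eigen /onsite_energy; ring.
rewrite -lecR rmorphM /= -!normr_ReE -normrM nbr_sum rmorph_sum /=.
under [leRHS]eq_bigr do rewrite -normr_ReE.
exact: ler_norm_sum.
Qed.

Theorem lemma4p4 (R : rcfType) (N d : nat) (hN : (1 <= N)%N) (hd : (1 <= d)%N)
  (lam : R) (hlam : 0 < lam) (Vc Uc : 'rV[int]_d -> R)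
  (hU : finitely_supported Uc)
  (Th : {fset point N d}) (hsym : symmetric_set Th)
  (eta : R) (heta : (4 * N * d)%:R < eta)
  (hgap : forall x y, x \in Th -> y \in Th ->
     (forall p : 'S_N, x != pact p y) ->
     eta <= `|(lam * Vpot Vc x + Upot Uc x) - (lam * Vpot Vc y + Upot Uc y)|)
  (phi : point N d -> R[i])
  (hphi : normalized_eigenfunction lam Vc Uc Th phi) :
  exists2 x, x \in Th &
    forall y, y \in Th ->
      `|phi y| <= (((2 * N * d)%:R / (eta - (2 * N * d)%:R)) ^+ symdist y x)%:C.
Proof.
case: hphi => hnorm [E eigen].
pose a y := complex.Re `|phi y|.
pose m (y : point N d) := complex.Re `|(onsite_energy lam Vc Uc y)%:C - E|.
have a_ge0 y : 0 <= a y by exact: Re_normr_ge0.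
have sum_a2 : \sum_(y <- Th) a y ^+ 2 = 1.
  apply: complexI; rewrite rmorph_sum rmorph1 -hnorm.
  by apply: eq_bigr => y _; rewrite rmorphXn; congr (_ ^+ 2); exact/esym/normr_ReE.
have [x xTh [ax_gt0 a_max]] := normalized_argmax sum_a2 a_ge0.
have D_lt_eta : (2 * N * d)%:R < eta.
  by apply: le_lt_trans heta; rewrite ler_nat; lia.
exists x => // y yTh; rewrite normr_ReE lecR.
apply: (amplitude_decay (m := m) (fset_uniq Th) a_ge0 _ _ xTh ax_gt0 a_max _ D_lt_eta) => //.
- by move=> z; exact: sum_sqr_eq1_le1 sum_a2 a_ge0.
- by move=> z zTh; exact: eigen_local_bound (eigen z zTh).
- move=> z zTh pos; apply: le_trans (hgap _ _ xTh zTh (symdist_gt0_off_orbit pos)) _.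
  exact: dist_le_detunings.
Qed.
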